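(* Let $G=(V,E)$ be an undirected graph (finite or infinite) and let $X,Y$ be two ``strong'' partitive sets of $G$ with $X\cap Y=\emptyset$. Then there is at most one color class $\widehat A$ of $G$ containing an edge $(x,y)$ with $x\in X$ and $y\in Y$.
   Context: A graph $G=(V,E)$ has vertex set $V$ and edge set $E\subseteq V^2$; it is undirected if $E$ is irreflexive and symmetric. A set $X\subseteq V$ is a partitive set of $G$ if for all $a,b\in X$ and $c\in V\setminus X$: $(a,c)\in E\Leftrightarrow(b,c)\in E$ and $(c,a)\in E\Leftrightarrow(c,b)\in E$; $I(G)$ is the class of partitive sets. A ``strong'' partitive set is an $X\in I(G)$ such that for every $Y\in I(G)$ with $X\cap Y\neq\emptyset$, $X\subseteq Y$ or $Y\subseteq X$. Implication classes: on $E$ define $(a,b)\Gamma(a',b')$ iff either $a=a'$ and $(b,b')\notin E$, or $b=b'$ and $(a,a')\notin E$; the classes of the transitive closure $\Gamma^*$ are the implication classes. For an implication class $A$, $A^{-1}=\{(b,a):(a,b)\in A\}$ and the color class is $\widehat A=A\cup A^{-1}$. *)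

From Stdlib Require Import Relations.Relation_Operators.

Section Graphs.
Variable V : Type.
Variable E : V -> V -> Prop.

Definition undirected : Prop :=
  (forall a, ~ E a a) /\ (forall a b, E a b -> E b a).

Definition partitive (X : V -> Prop) : Prop :=
  forall a b c, X a -> X b -> ~ X c ->
    (E a c <-> E b c) /\ (E c a <-> E c b).

Definition strong_partitive (X : V -> Prop) : Prop :=
  partitive X /\
  forall Y : V -> Prop, partitive Y -> (exists v, X v /\ Y v) ->
    (forall v, X v -> Y v) \/ (forall v, Y v -> X v).

Definition edge (p : V * V) : Prop := E (fst p) (snd p).

Definition Gamma (p q : V * V) : Prop :=
  edge p /\ edge q /\
  ((fst p = fst q /\ ~ E (snd p) (snd q)) \/
   (snd p = snd q /\ ~ E (fst p) (fst q))).

(* A is an implication class: an equivalence class of the transitive closure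
   Gamma* on E (Gamma is reflexive on E for undirected G, so the class of
   an edge e is everything Gamma-reachable from e, including e). *)
Definition implication_class (A : V * V -> Prop) : Prop :=
  exists e, edge e /\
    forall f, A f <-> (e = f \/ clos_trans _ Gamma e f).

Definition inv_class (A : V * V -> Prop) : V * V -> Prop :=
  fun p => A (snd p, fst p).

Definition color_class (A : V * V -> Prop) : V * V -> Prop :=
  fun p => A p \/ inv_class A p.

End Graphs.

Arguments undirected {V} E.
Arguments partitive {V} E X.
Arguments strong_partitive {V} E X.
Arguments edge {V} E p.
Arguments Gamma {V} E p q.
Arguments implication_class {V} E A.
Arguments inv_class {V} A p.
Arguments color_class {V} A p.

(* Let x be outside a strong module Y and adjacent to it. If (x,y) and (x,t),
   with y, t in Y, were not Gamma*-equivalent, the set Z made of x's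
   co-component among the vertices complete to Y, together with the vertices
   y' of Y with (x,y) Gamma* (x,y'), would be a module meeting Y and
   containing x, but not containing t: it would overlap Y. (The only
   obstruction to Z being a module, a vertex c not adjacent to Y but adjacent
   to the co-component, directly yields (x,y) Gamma* (x,t).) Applying this on
   both sides, all edges from X to Y lie in one implication class. *)
From Stdlib Require Import Relations Classical.

Section ReflTransClosure.
Variables (T : Type) (R : relation T).

Lemma clos_rt_eq_or_t p q :
  clos_refl_trans T R p q <-> p = q \/ clos_trans T R p q.
Proof.
  split.
  - induction 1 as [p q Hpq | p | p q r _ [<- | Hpq] _ [<- | Hqr]]; auto.
    + right; now apply t_step.
    + right; now apply t_trans with q.
  - intros [<- | Hpq]; [apply rt_refl | now apply clos_t_clos_rt].
Qed.

Lemma clos_rt_sym :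
  (forall p q, R p q -> R q p) ->
  forall p q, clos_refl_trans T R p q -> clos_refl_trans T R q p.
Proof.
  intros Rsym p q; induction 1.
  - now apply rt_step, Rsym.
  - apply rt_refl.
  - now apply rt_trans with y.
Qed.

Lemma clos_rt_map (f : T -> T) :
  (forall p q, R p q -> R (f p) (f q)) ->
  forall p q, clos_refl_trans T R p q -> clos_refl_trans T R (f p) (f q).
Proof.
  intros Rf p q; induction 1.
  - now apply rt_step, Rf.
  - apply rt_refl.
  - now apply rt_trans with (f y).
Qed.

End ReflTransClosure.

Section ImplicationClasses.
Variables (V : Type) (E : V -> V -> Prop).
Hypothesis Esym : forall a b, E a b -> E b a.

Definition swap (p : V * V) : V * V := (snd p, fst p).

Definition gamma_eq : relation (V * V) := clos_refl_trans _ (Gamma E).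

Definition color_eq (p q : V * V) : Prop := gamma_eq p q \/ gamma_eq p (swap q).

Lemma swap_involutive p : swap (swap p) = p.
Proof. now destruct p. Qed.

Lemma Gamma_sym p q : Gamma E p q -> Gamma E q p.
Proof.
  intros (Hp & Hq & [[Heq HnE] | [Heq HnE]]); repeat split; auto;
    [left | right]; split; auto.
Qed.

Lemma Gamma_swap p q : Gamma E p q -> Gamma E (swap p) (swap q).
Proof.
  destruct p as [a b], q as [c d]; unfold Gamma, edge, swap; simpl.
  intros (Hp & Hq & [[Heq HnE] | [Heq HnE]]); repeat split; auto.
Qed.

Lemma gamma_eq_sym p q : gamma_eq p q -> gamma_eq q p.
Proof. apply clos_rt_sym, Gamma_sym. Qed.

Lemma gamma_eq_swap p q : gamma_eq p q -> gamma_eq (swap p) (swap q).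
Proof. apply clos_rt_map, Gamma_swap. Qed.

Lemma gamma_eq_trans p q r : gamma_eq p q -> gamma_eq q r -> gamma_eq p r.
Proof. apply rt_trans. Qed.

Lemma gamma_eq_fst a b c : E a b -> E a c -> ~ E b c -> gamma_eq (a, b) (a, c).
Proof. intros; apply rt_step; unfold Gamma, edge; simpl; auto. Qed.

Lemma gamma_eq_snd a b c : E a c -> E b c -> ~ E a b -> gamma_eq (a, c) (b, c).
Proof. intros; apply rt_step; unfold Gamma, edge; simpl; auto. Qed.

Lemma color_eq_sym p q : color_eq p q -> color_eq q p.
Proof.
  intros [H | H]; [left | right]; apply gamma_eq_sym; auto.
  rewrite <- (swap_involutive q); now apply gamma_eq_swap.
Qed.

Lemma color_eq_trans p q r : color_eq p q -> color_eq q r -> color_eq p r.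
Proof.
  intros [Hpq | Hpq] [Hqr | Hqr].
  - left; now apply gamma_eq_trans with q.
  - right; now apply gamma_eq_trans with q.
  - right; apply gamma_eq_trans with (swap q); auto; now apply gamma_eq_swap.
  - left; apply gamma_eq_trans with (swap q); auto.
    rewrite <- (swap_involutive r); now apply gamma_eq_swap.
Qed.

Lemma color_class_color_eq A :
  implication_class E A -> exists e, forall p, color_class A p <-> color_eq e p.
Proof.
  intros [e [_ HA]]; exists e; intros [a b].
  unfold color_class, inv_class, color_eq, gamma_eq; simpl.
  rewrite !HA, !clos_rt_eq_or_t; reflexivity.
Qed.

Lemma color_class_eq A1 A2 p q :
  implication_class E A1 -> implication_class E A2 ->
  color_class A1 p -> color_class A2 q -> color_eq p q ->
  forall r, color_class A1 r <-> color_class A2 r.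
Proof.
  intros HA1 HA2 Hp Hq Hpq r.
  destruct (color_class_color_eq A1 HA1) as [e1 He1].
  destruct (color_class_color_eq A2 HA2) as [e2 He2].
  assert (He12 : color_eq e1 e2).
  { apply color_eq_trans with p; [now apply He1 |].
    apply color_eq_trans with q; [easy |].
    now apply color_eq_sym, He2. }
  rewrite He1, He2; split; intro H.
  - now apply color_eq_trans with e1; [apply color_eq_sym |].
  - now apply color_eq_trans with e2.
Qed.

Lemma partitive_adj (Y : V -> Prop) c y y' :
  partitive E Y -> ~ Y c -> Y y -> Y y' -> E c y -> E c y'.
Proof. intros HY nYc Yy Yy'; apply (HY y y' c Yy Yy' nYc). Qed.

Lemma partitive_of_adj_iff (Z : V -> Prop) (P : V -> Prop) :
  (forall a c, Z a -> ~ Z c -> (E a c <-> P c)) -> partitive E Z.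
Proof.
  intros HZ a b c Za Zb nZc; split.
  - now rewrite (HZ a c Za nZc), (HZ b c Zb nZc).
  - split; intro H; apply Esym.
    + apply (HZ b c Zb nZc), (HZ a c Za nZc); auto.
    + apply (HZ a c Za nZc), (HZ b c Zb nZc); auto.
Qed.

Section Fan.
Variable Y : V -> Prop.
Hypothesis HY : strong_partitive E Y.
Variables x y0 : V.
Hypothesis nYx : ~ Y x.
Hypothesis Yy0 : Y y0.
Hypothesis Exy0 : E x y0.

Definition complete_to_Y (u : V) : Prop := ~ Y u /\ forall y, Y y -> E u y.

Definition co_edge (a b : V) : Prop := complete_to_Y a /\ complete_to_Y b /\ ~ E a b.

Definition co_component (u : V) : Prop := clos_refl_trans _ co_edge x u.

Lemma complete_to_Y_x : complete_to_Y x.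
Proof. split; auto; intros y Yy; now apply (partitive_adj Y x y0 y (proj1 HY)). Qed.

Lemma not_complete_to_Y_nonadj c y : ~ Y c -> ~ complete_to_Y c -> Y y -> ~ E c y.
Proof.
  intros nYc nCc Yy Ecy; apply nCc; split; auto.
  intros z Yz; now apply (partitive_adj Y c y z (proj1 HY)).
Qed.

Lemma co_component_complete u : co_component u -> complete_to_Y u.
Proof.
  intro Hu; apply clos_rt_rtn1 in Hu.
  destruct Hu as [| b u (_ & Cu & _)]; [apply complete_to_Y_x | exact Cu].
Qed.

Lemma co_edge_gamma_eq a b y :
  clos_refl_trans _ co_edge a b -> Y y -> gamma_eq (a, y) (b, y).
Proof.
  intros Hab Yy; induction Hab as [a b (Ca & Cb & nEab) | a | a b c _ IHab _ IHbc].
  - apply gamma_eq_snd; [apply Ca | apply Cb | ]; auto.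
  - apply rt_refl.
  - now apply gamma_eq_trans with (b, y).
Qed.

Lemma fan_gamma_eq_via_outside c n t :
  ~ Y c -> ~ complete_to_Y c -> co_component n -> E c n -> Y t ->
  gamma_eq (x, y0) (x, t).
Proof.
  intros nYc nCc Hn Ecn Yt.
  destruct (co_component_complete n Hn) as [_ Cn].
  apply gamma_eq_trans with (n, y0); [now apply co_edge_gamma_eq |].
  apply gamma_eq_trans with (n, t); [| now apply gamma_eq_sym, co_edge_gamma_eq].
  rewrite <- (swap_involutive (n, y0)), <- (swap_involutive (n, t)).
  apply gamma_eq_swap; unfold swap; simpl.
  apply gamma_eq_trans with (c, n).
  - apply gamma_eq_snd; auto.
    intro H; apply (not_complete_to_Y_nonadj c y0); auto.
  - apply gamma_eq_sym, gamma_eq_snd; auto.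
    intro H; apply (not_complete_to_Y_nonadj c t); auto.
Qed.

Section NoOutsideNeighbour.
Hypothesis no_outside : forall c n,
  ~ Y c -> ~ complete_to_Y c -> co_component n -> ~ E c n.

Definition fan_module (v : V) : Prop :=
  (Y v /\ gamma_eq (x, y0) (x, v)) \/ co_component v.

Lemma fan_module_adj_iff a c :
  fan_module a -> ~ fan_module c -> (E a c <-> Y c \/ complete_to_Y c).
Proof.
  intros Za nZc.
  destruct (classic (Y c)) as [Yc | nYc]; [| destruct (classic (complete_to_Y c)) as [Cc | nCc]].
  - split; auto; intros _.
    destruct Za as [[Ya Ra] | Ha]; [| now apply co_component_complete].
    apply NNPP; intro nEac; apply nZc; left; split; auto.
    apply gamma_eq_trans with (x, a); auto.
    apply gamma_eq_fst; auto; apply complete_to_Y_x; auto.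
  - split; auto; intros _.
    destruct Za as [[Ya _] | Ha]; [now apply Esym, Cc |].
    apply NNPP; intro nEac; apply nZc; right.
    apply rt_trans with a; auto; apply rt_step.
    split; [now apply co_component_complete | split; auto].
  - split; [| tauto]; intro Eac; exfalso.
    destruct Za as [[Ya _] | Ha].
    + now apply (not_complete_to_Y_nonadj c a), Esym.
    + apply (no_outside c a); auto.
Qed.

Lemma fan_gamma_eq_no_outside t : Y t -> gamma_eq (x, y0) (x, t).
Proof.
  intro Yt.
  assert (Zmod : partitive E fan_module)
    by exact (partitive_of_adj_iff _ _ fan_module_adj_iff).
  assert (Zy0 : fan_module y0) by (left; split; auto; apply rt_refl).
  assert (Zx : fan_module x) by (right; apply rt_refl).
  destruct (proj2 HY fan_module Zmod (ex_intro _ y0 (conj Yy0 Zy0))) as [HYZ | HZY].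
  - destruct (HYZ t Yt) as [[_ H] | Ht]; [easy |].
    now destruct (co_component_complete t Ht).
  - now destruct (nYx (HZY x Zx)).
Qed.

End NoOutsideNeighbour.

Lemma fan_gamma_eq t : Y t -> gamma_eq (x, y0) (x, t).
Proof.
  intro Yt.
  destruct (classic (exists c n,
    ~ Y c /\ ~ complete_to_Y c /\ co_component n /\ E c n))
    as [(c & n & nYc & nCc & Hn & Ecn) | Hno].
  - now apply (fan_gamma_eq_via_outside c n).
  - apply fan_gamma_eq_no_outside; auto.
    intros c n nYc nCc Hn Ecn; apply Hno; now exists c, n.
Qed.

End Fan.

Lemma strong_modules_edges_gamma_eq (X Y : V -> Prop) x1 y1 x2 y2 :
  strong_partitive E X -> strong_partitive E Y -> (forall v, ~ (X v /\ Y v)) ->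
  X x1 -> Y y1 -> X x2 -> Y y2 -> E x1 y1 ->
  gamma_eq (x1, y1) (x2, y2).
Proof.
  intros HX HY Hdisj Xx1 Yy1 Xx2 Yy2 Ex1y1.
  assert (nYx1 : ~ Y x1) by (intro; apply (Hdisj x1); auto).
  assert (nXy2 : ~ X y2) by (intro; apply (Hdisj y2); auto).
  assert (Ey2x1 : E y2 x1)
    by (apply Esym; now apply (partitive_adj Y x1 y1 y2 (proj1 HY))).
  apply gamma_eq_trans with (x1, y2); [now apply (fan_gamma_eq Y HY x1 y1) |].
  rewrite <- (swap_involutive (x1, y2)), <- (swap_involutive (x2, y2)).
  now apply gamma_eq_swap, (fan_gamma_eq X HX y2 x1).
Qed.

End ImplicationClasses.

Theorem theorem3p4 (V : Type) (E : V -> V -> Prop) (X Y : V -> Prop) :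
  undirected E ->
  strong_partitive E X -> strong_partitive E Y ->
  (forall v, ~ (X v /\ Y v)) ->
  forall A1 A2 : V * V -> Prop,
    implication_class E A1 -> implication_class E A2 ->
    (exists x y, X x /\ Y y /\ E x y /\ color_class A1 (x, y)) ->
    (exists x y, X x /\ Y y /\ E x y /\ color_class A2 (x, y)) ->
    forall p, color_class A1 p <-> color_class A2 p.
Proof.
  intros [_ Esym] HX HY Hdisj A1 A2 HA1 HA2
    (x1 & y1 & Xx1 & Yy1 & Ex1y1 & C1) (x2 & y2 & Xx2 & Yy2 & _ & C2).
  apply (color_class_eq V E Esym A1 A2 (x1, y1) (x2, y2) HA1 HA2 C1 C2).
  left; now apply (strong_modules_edges_gamma_eq V E Esym X Y).
Qed.
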